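(* Let $G$ be a finite group whose prime graph $\Pi(G)$ has no edges, i.e. $G$ contains no element whose order is a product of two distinct primes. Then $P(G)$ is a cograph.
   Context: The prime graph (Gruenberg--Kegel graph) $\Pi(G)$ of a finite group $G$ has as vertices the prime divisors of $|G|$, with distinct primes $p,q$ adjacent if and only if $G$ contains an element of order $pq$. The power graph $P(G)$ has vertex set $G$, with distinct $u,v$ adjacent if and only if $u=v^i$ or $v=u^j$ for some integers $i,j$. A cograph is a graph with no induced subgraph isomorphic to the path $P_4$ on four vertices. *)

From mathcomp Require Import all_boot all_fingroup.
Set Implicit Arguments. Unset Strict Implicit. Unset Printing Implicit Defensive.
Local Open Scope group_scope.

Definition prime_graph_edgeless (gT : finGroupType) (G : {group gT}) : Prop :=
  forall (x : gT) (p q : nat), x \in G -> prime p -> prime q -> p != q ->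
    #[x] <> (p * q)%N.

(* Power graph adjacency (on vertex set G): u, v distinct and one is a power
   of the other.  In a finite group, "u = v^i for some integer i" is exactly
   u \in <[v]>. *)
Definition pow_adj (gT : finGroupType) (u v : gT) : bool :=
  (u != v) && ((u \in <[v]>) || (v \in <[u]>)).

Definition is_cograph (T : finType) (A : {set T}) (e : rel T) : Prop :=
  ~ exists a b c d : T,
      [/\ [/\ a \in A, b \in A, c \in A & d \in A],
          uniq [:: a; b; c; d],
          [/\ e a b, e b c & e c d] &
          [/\ ~~ e a c, ~~ e b d & ~~ e a d]].

Definition power_graph_is_cograph (gT : finGroupType) (G : {group gT}) : Prop :=
  is_cograph G (@pow_adj gT).

From mathcomp Require Import all_boot all_fingroup.
From mathcomp Require Import cyclic.

Set Implicit Arguments.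
Unset Strict Implicit.
Unset Printing Implicit Defensive.

(* The power graph is the comparability graph of the preorder
   "x is a power of y", i.e. x \in <[y]>.  The proof has two parts.
   - Combinatorics: the comparability graph of a preorder whose down-sets
     (below vertices of the graph) are chains has no induced P4
     ([comparability_cograph]).  Indeed in a P4 a-b-c-d the middle edge
     b-c forces two neighbours of the lower of b, c to lie below it, so
     they would be comparable, i.e. adjacent.
   - Group theory: if no element of G has order pq (p <> q primes), every
     element of G has prime-power order ([order_pnat_edgeless]); the
     subgroups of a cyclic p-group are totally ordered by inclusion, so the
     powers of any c \in G form a chain ([cycle_chain_edgeless]). *)

Definition comparability (T : eqType) (le : rel T) : rel T :=
  fun x y => (x != y) && (le x y || le y x).

Lemma comparability_cograph (T : finType) (A : {set T}) (le : rel T) :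
  transitive le ->
  (forall c x y, c \in A -> le x c -> le y c -> le x y || le y x) ->
  is_cograph A (comparability le).
Proof.
move=> le_trans down_chain [a [b [c [d [[aA bA cA dA] uniq4 adj nadj]]]]].
move: uniq4; rewrite /= !inE !negb_or.
move=> /and4P[/and3P[ab ac ad] /andP[bc bd] cd _].
case: adj nadj; rewrite /comparability ab bc cd ac bd ad /= !negb_or.
move=> eab ebc ecd [/andP[/negbTE nac /negbTE nca] /andP[/negbTE nbd /negbTE ndb] _].
case/orP: ebc => [le_bc|le_cb].
- case/orP: ecd => [le_cd|le_dc].
  + by rewrite (le_trans _ _ _ le_bc le_cd) in nbd.
  + by have := down_chain c b d cA le_bc le_dc; rewrite nbd ndb.
- case/orP: eab => [le_ab|le_ba].
  + by have := down_chain b a c bA le_ab le_cb; rewrite nac nca.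
  + by rewrite (le_trans _ _ _ le_cb le_ba) in nca.
Qed.

Lemma pnat_of_no_prime_pair_dvd (n : nat) :
  0 < n ->
  (forall p q, prime p -> prime q -> p != q -> ~~ (p * q %| n)) ->
  exists2 p, prime p & p.-nat n.
Proof.
move=> n_gt0 no_pq; have [n_le1|n_gt1] := leqP n 1.
  have -> : n = 1 by apply/eqP; rewrite eqn_leq n_le1.
  by exists 2.
have p_pr := pdiv_prime n_gt1.
exists (pdiv n) => //; apply/pnatP => // q q_pr q_n; rewrite inE.
apply: contraT; rewrite eq_sym => q_neq.
have p_q_cop : coprime (pdiv n) q by rewrite prime_coprime // dvdn_prime2.
have /negbTE <- := no_pq _ _ p_pr q_pr q_neq.
by rewrite Gauss_dvd // q_n pdiv_dvd.
Qed.

Lemma dvdn_total_pnat (p n d1 d2 : nat) :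
  prime p -> p.-nat n -> d1 %| n -> d2 %| n -> (d1 %| d2) || (d2 %| d1).
Proof.
move=> p_pr /p_natP[k ->].
case/(dvdn_pfactor _ _ p_pr) => m1 _ -> /(dvdn_pfactor _ _ p_pr)[m2 _ ->].
by rewrite !dvdn_Pexp2l ?prime_gt1 ?leq_total.
Qed.

Local Open Scope group_scope.

(* In a group whose prime graph is edgeless every element has prime-power
   order: if p * q divided #[c], a power of c would have order p * q. *)
Lemma order_pnat_edgeless (gT : finGroupType) (G : {group gT}) (c : gT) :
  prime_graph_edgeless G -> c \in G -> exists2 p, prime p & p.-nat #[c].
Proof.
move=> edgeless cG; apply: pnat_of_no_prime_pair_dvd => // p q p_pr q_pr pq.
apply/negP => pq_c; apply: (edgeless (c ^+ (#[c] %/ (p * q)%N)) p q) => //.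
- by rewrite groupX.
- by rewrite orderXdiv ?dvdn_div // divnA // mulKn.
Qed.

Lemma cycle_chain_edgeless (gT : finGroupType) (G : {group gT}) (c x y : gT) :
  prime_graph_edgeless G -> c \in G -> x \in <[c]> -> y \in <[c]> ->
  (x \in <[y]>) || (y \in <[x]>).
Proof.
move=> edgeless cG xc yc; have [p p_pr p_c] := order_pnat_edgeless edgeless cG.
have sxc : <[x]> \subset <[c]> by rewrite cycle_subG.
have syc : <[y]> \subset <[c]> by rewrite cycle_subG.
have := dvdn_total_pnat p_pr p_c (cardSg sxc) (cardSg syc).
by rewrite !(cardSg_cyclic (cycle_cyclic c)) // !cycle_subG.
Qed.

Lemma mem_cycle_trans (gT : finGroupType) : transitive (fun x y : gT => x \in <[y]>).
Proof. by move=> y x z xy; rewrite -cycle_subG => /subsetP; apply. Qed.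

Theorem mainTheorem6 (gT : finGroupType) (G : {group gT}) :
  prime_graph_edgeless G -> power_graph_is_cograph G.
Proof.
move=> edgeless; apply: comparability_cograph; first exact: mem_cycle_trans.
by move=> c x y; apply: cycle_chain_edgeless.
Qed.
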